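(* Let $B$ be a Boolean algebra, $d\ge 1$ an integer, and let $a_0,\dots,a_{d+1},b_1,\dots,b_{d+1}\in B$ satisfy $a_0=1$, $a_1\ge a_2\ge\dots\ge a_{d+1}=0$, $b_1\ge b_2\ge\dots\ge b_{d+1}=0$, and $a_i\le b_i$ for all $i$. Then the system in the unknowns $x_1,\dots,x_d\in B$ $$x_1\ge x_2\ge\dots\ge x_d,\qquad \bigvee_{i=0}^{n}(a_{n-i}\wedge x_i)=b_n\quad(n=1,\dots,d+1),$$ where $x_0=1$ and $x_{d+1}=0$ are constants, has at most one solution $(x_1,\dots,x_d)\in B^d$.
   Context: $\ge$ is the lattice order of the Boolean algebra $B$. *)

(* A Boolean algebra is a complemented distributive lattice
   with top and bottom: MathComp's ctbDistrLatticeType. *)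
From HB Require Import structures.
From mathcomp Require Import all_boot all_order.
Set Implicit Arguments. Unset Strict Implicit. Unset Printing Implicit Defensive.
Import Order.Theory.
Local Open Scope order_scope.

(* Extension of unknowns x_1..x_d (given as x : nat -> T, only values at
   1..d matter) with the constants x_0 = 1 and x_(d+1) = 0 (and 0 beyond). *)
Definition xext {disp : Order.disp_t} {T : ctbDistrLatticeType disp}
  (d : nat) (x : nat -> T) (i : nat) : T :=
  if i == 0%N then \top else if (i <= d)%N then x i else \bot.

Definition is_solution {disp : Order.disp_t} {T : ctbDistrLatticeType disp}
  (d : nat) (a b x : nat -> T) : Prop :=
  (forall i, (1 <= i < d)%N -> x i.+1 <= x i) /\
  (forall n, (1 <= n <= d.+1)%N ->
     \join_(0 <= i < n.+1) (a (n - i)%N `&` xext d x i) = b n).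

From HB Require Import structures.
From mathcomp Require Import all_boot all_order.
Import Order.Theory Order.NatMonotonyTheory.
Local Open Scope order_scope.

Section Uniqueness.
Variables (disp : Order.disp_t) (T : ctbDistrLatticeType disp) (d : nat).

Lemma xext_in (x : nat -> T) n : (1 <= n <= d)%N -> xext d x n = x n.
Proof. by case/andP=> n_gt0 n_le_d; rewrite /xext gtn_eqF // n_le_d. Qed.

Lemma xext_antitone (x : nat -> T) :
  (forall i, (1 <= i < d)%N -> x i.+1 <= x i) ->
  forall i j, (i <= j)%N -> xext d x j <= xext d x i.
Proof.
move=> x_chain i j; apply: nonincnP => -[|{}i]; rewrite /xext /=.
  by case: ifP => _; rewrite ?lex1 ?le0x.
case: ifP => [lt_id | _]; last exact: le0x.
by rewrite ltnW // x_chain.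
Qed.

Variables (a b : nat -> T).

Lemma below_equation (x : nat -> T) m n e :
  is_solution d a b x -> (1 <= m <= d.+1)%N -> (n <= m)%N ->
  e <= a (m - n) `&` xext d x n -> e <= b m.
Proof.
move=> [_ x_eq] m_range n_le_m e_le; rewrite -(x_eq m m_range).
apply: le_trans e_le _; apply: (@joins_min_seq _ _ _ _ _ _ n) => //.
by rewrite mem_index_iota ltnS n_le_m.
Qed.

Hypothesis a0_top : a 0%N = \top.
Hypothesis a_chain : forall i, (1 <= i <= d)%N -> a i.+1 <= a i.
Hypothesis ad_bot : a d.+1 = \bot.
Hypothesis bd_bot : b d.+1 = \bot.

Lemma a_antitone p q : (p <= q <= d.+1)%N -> a q <= a p.
Proof.
case/andP=> le_pq le_q; have le_p := leq_trans le_pq le_q.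
apply: (@nonincn_inP _ _ [pred i | (i <= d.+1)%N]) => //.
  move=> i j _ le_j k /andP[_ lt_kj] /=; rewrite inE in le_j.
  exact: leq_trans (ltnW lt_kj) le_j.
move=> [_ _|i _]; first by rewrite a0_top lex1.
by rewrite inE ltnS => le_id; apply: a_chain.
Qed.

Lemma disjoint_equation (y : nat -> T) m n e :
  is_solution d a b y -> (1 <= m <= d.+1)%N -> (n <= m)%N ->
  e <= ~` xext d y n -> e <= ~` a (m - n).+1 -> e <= ~` b m.
Proof.
move=> [y_chain y_eq] m_range n_le_m e_y e_a.
rewrite lexC -(y_eq m m_range); apply/joinsP_seq => i.
rewrite mem_index_iota ltnS => /= le_im _; rewrite -lexC.
case: (leqP n i) => [le_ni | lt_in].
  apply: le_trans e_y _; rewrite leC; apply: le_trans (leIr _ _) _.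
  exact: xext_antitone.
apply: le_trans e_a _; rewrite leC; apply: le_trans (leIl _ _) _.
apply: a_antitone; rewrite (leq_trans (leq_subr _ _)) ?(andP m_range).2 //.
by rewrite andbT ltn_sub2l // (leq_trans lt_in).
Qed.

Lemma solution_le (x y : nat -> T) n :
  is_solution d a b x -> is_solution d a b y -> (1 <= n <= d)%N ->
  x n <= y n.
Proof.
move=> x_sol y_sol n_range; have [n_gt0 n_le_d] := andP n_range.
set u := x n `&` ~` y n.
suff u_le_a j : (j <= d.+1)%N -> u <= a j.
  have := u_le_a _ (leqnn _); rewrite ad_bot lex0 disj_leC complK.
  by rewrite /u -xext_in // -[y n]xext_in.
elim: j => [_|j IH lt_jd]; first by rewrite a0_top lex1.
have u_a := IH (ltnW lt_jd).
rewrite -[a j.+1]complK -disj_leC -lex0.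
set e := u `&` ~` a j.+1.
have e_term m : (m - n <= j)%N -> e <= a (m - n) `&` xext d x n.
  move=> le_mnj; rewrite lexI xext_in // -/e.
  rewrite (le_trans (leIl _ _) (leIl _ _)) andbT.
  apply: le_trans (leIl _ _) (le_trans u_a _).
  by apply: a_antitone; rewrite le_mnj ltnW.
case: (leqP (n + j) d.+1) => [le_nj | lt_nj].
- have m_range : (1 <= n + j <= d.+1)%N by rewrite le_nj addn_gt0 n_gt0.
  have e_b : e <= b (n + j).
    apply: below_equation x_sol m_range (leq_addr _ _) _.
    by rewrite e_term ?addKn.
  have e_nb : e <= ~` b (n + j).
    apply: disjoint_equation y_sol m_range (leq_addr _ _) _ _.
      by rewrite xext_in // (le_trans (leIl _ _) (leIr _ _)).
    by rewrite addKn leIr.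
  by rewrite -(meetxC (b (n + j))) lexI e_b.
- rewrite -bd_bot.
  apply: below_equation x_sol _ (leq_trans n_le_d _) _; rewrite ?leqnn //.
  by rewrite e_term // leq_subLR ltnW.
Qed.

End Uniqueness.

Theorem mainTheorem9 (disp : Order.disp_t) (T : ctbDistrLatticeType disp)
  (d : nat) (hd : (1 <= d)%N) (a b : nat -> T)
  (ha0 : a 0%N = \top)
  (ha : forall i, (1 <= i <= d)%N -> a i.+1 <= a i)
  (had : a d.+1 = \bot)
  (hb : forall i, (1 <= i <= d)%N -> b i.+1 <= b i)
  (hbd : b d.+1 = \bot)
  (hab : forall i, (1 <= i <= d.+1)%N -> a i <= b i)
  (x y : nat -> T) :
  is_solution d a b x -> is_solution d a b y ->
  forall i, (1 <= i <= d)%N -> x i = y i.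
Proof.
move=> x_sol y_sol i i_range; apply: le_anti.
by rewrite !(@solution_le _ _ _ _ _ ha0 ha had hbd _ _ i _ _ i_range).
Qed.
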